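(* Let $\mathcal H$ be a Hilbert space, $(M_n)$ a sequence of bounded operators on $\mathcal H$, and $(L_n)$ subspaces of $\mathcal H$ such that: $(M_n)$ is uniformly bounded; $L_n$ is invariant under $M_n$; and for every sequence $(g_n)$ with $g_n\in L_n$, $\|g_n\|\le1$, the sequence $(M_ng_n)$ is relatively compact in $\mathcal H$. Assume $M_n\to M$ strongly for some bounded operator $M$ on $\mathcal H$, and that there are vectors $g_n\in L_n$ with $\|g_n\|=1$ and scalars $\lambda_n$ with $M_ng_n=\lambda_ng_n$. Then any non-zero cluster point $\lambda_0$ of $(\lambda_n)$ is an eigenvalue of $M$, and there is a subsequence of $(g_n)$ converging to a vector $g$ with $Mg=\lambda_0g$. *)

From HB Require Import structures.
From mathcomp Require Import all_boot all_order all_algebra.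
From mathcomp Require Import all_classical all_reals all_analysis.
From mathcomp.real_closed Require Import complex.

Set Implicit Arguments.
Unset Strict Implicit.
Unset Printing Implicit Defensive.

Import Order.TTheory GRing.Theory Num.Theory.
Import numFieldTopology.Exports numFieldNormedType.Exports.
Local Open Scope classical_set_scope.
Local Open Scope ring_scope.

(* The field C = R[i] of complex numbers (mathcomp-real-closed) with its
   usual norm topology (the generic one MathComp-Analysis gives every
   numClosedFieldType, made canonical for R[i]). *)
#[warnings="-redundant-canonical-projection"]
HB.instance Definition _ (R : rcfType) :=
  PseudoPointedMetric.copy R[i] (R[i] : numClosedFieldType)^o.

(* A (complex) inner product on V whose induced norm is the given norm of V.
   A complete normed space V over C = R[i] carrying such an inner product is
   a (complex) Hilbert space. *)
Definition is_inner_product (R : rcfType) (V : normedModType R[i])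
    (ip : V -> V -> R[i]) : Prop :=
  [/\ forall x y z, ip (x + y) z = ip x z + ip y z,
      forall (a : R[i]) x y, ip (a *: x) y = a * ip x y,
      forall x y, ip y x = (ip x y)^*%C &
      forall x, ip x x = `|x| ^+ 2].

Definition is_subspace (K : numDomainType) (V : lmodType K) (L : set V) : Prop :=
  [/\ L 0, forall x y, L x -> L y -> L (x + y) &
      forall (a : K) x, L x -> L (a *: x)].

Definition bounded_op (K : numDomainType) (V : normedModType K) (T : {linear V -> V}) :=
  exists C : K, forall x, `|T x| <= C * `|x|.

Definition rel_compact (T : topologicalType) (A : set T) := compact (closure A).

From HB Require Import structures.
From mathcomp Require Import all_boot all_order all_algebra.
From mathcomp Require Import all_classical all_reals all_analysis.
From mathcomp.real_closed Require Import complex.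
Import Order.TTheory GRing.Theory Num.Theory.
Import numFieldTopology.Exports numFieldNormedType.Exports.
Local Open Scope classical_set_scope.
Local Open Scope ring_scope.

(* From the cluster point lam0 of the eigenvalues we pass to indices n with
   lam_n close to lam0; along them the vectors M_n g_n = lam_n g_n lie in a
   compact set and so cluster at some w, and a diagonal choice gives one
   subsequence with lam_n -> lam0 and M_n g_n -> w.  Then g_n -> w / lam0 =: v,
   a unit vector, and uniform boundedness turns M_n g_n - M_n v -> 0 into
   M v = lim M_n v = w = lam0 v. *)

Lemma strictly_increasing_choice {P : nat -> nat -> Prop} :
  (forall k m, exists2 n, (m < n)%N & P k n) ->
  exists phi : nat -> nat,
    {homo phi : m n / (m < n)%N >-> (m < n)%N} /\ forall k, P k (phi k).
Proof.
move=> hP.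
have /choice[f hf] : forall km : nat * nat, exists n, (km.2 < n)%N /\ P km.1 n.
  by move=> [k m]; have [n] := hP k m; exists n.
pose phi := fix phi k := f (k, if k is k'.+1 then phi k' else 0%N).
exists phi; split.
  by apply: homo_ltn => [m n p|k]; [exact: ltn_trans | case: (hf (k.+1, phi k))].
by case=> [|k]; [case: (hf (0, 0)%N) | case: (hf (k.+1, phi k))].
Qed.

Lemma cvg_subseq {T : topologicalType} {u : nat -> T} {x : T} {phi : nat -> nat} :
  {homo phi : m n / (m < n)%N >-> (m < n)%N} ->
  u @ \oo --> x -> (u \o phi) @ \oo --> x.
Proof.
move=> phi_inc ux; apply: cvg_comp ux => A [N _ NA].
have id_le_phi n : (n <= phi n)%N.
  by elim: n => // n IHn; exact: leq_ltn_trans IHn (phi_inc _ _ (ltnSn n)).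
by exists N => // n /= Nn; apply: NA; exact: leq_trans Nn (id_le_phi n).
Qed.

Lemma lef_invnS {K : numFieldType} {m n : nat} :
  (m <= n)%N -> (n.+1%:R : K)^-1 <= m.+1%:R^-1.
Proof. by move=> mn; rewrite lef_pV2 ?posrE ?ltr0n // ler_nat. Qed.

Lemma cvg_unscale {K : numFieldType} {V : normedModType K} {I : Type}
    {F : set_system I} {FF : Filter F} (c : I -> K) (u : I -> V) (c0 : K) (y : V) :
  c0 != 0 -> c @ F --> c0 -> (fun i => c i *: u i) @ F --> y -> u @ F --> c0^-1 *: y.
Proof.
move=> c0N0 cc0 cuy.
have unscale : \forall i \near F, (c i)^-1 *: (c i *: u i) = u i.
  apply: filterS (cvgr_neq0 _ cc0 c0N0) => i ci0.
  by rewrite scalerA mulVf // scale1r.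
exact: cvg_trans (near_eq_cvg unscale) (cvgZ (cvgV c0N0 cc0) cuy).
Qed.

Lemma equibounded_diff_cvg0 {K : numFieldType} {V W : normedModType K}
    {I : Type} {F : set_system I} {FF : Filter F}
    {T : I -> {linear V -> W}} {C : K} {u : I -> V} {x : V} :
  0 <= C -> (forall i y, `|T i y| <= C * `|y|) -> u @ F --> x ->
  (fun i => T i x - T i (u i)) @ F --> 0.
Proof.
move=> C0 TC /cvgrPdist_lt ux; apply/cvgr0Pnorm_lt => e e0.
have C1_gt0 : 0 < C + 1 by rewrite ltr_wpDl.
near=> i; rewrite -linearB (le_lt_trans (TC _ _)) //.
rewrite (le_lt_trans (ler_wpM2r (normr_ge0 _) (ler_wpDr ler01 (lexx C)))) //.
rewrite mulrC -ltr_pdivlMr //; near: i; apply: ux; exact: divr_gt0.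
Unshelve. all: by end_near.
Qed.

Lemma cvg_norm_cst {K : numFieldType} {V : normedModType K} {I : Type}
    {F : set_system I} {FF : ProperFilter F} (u : I -> V) (x : V) (r : K) :
  (forall i, `|u i| = r) -> u @ F --> x -> `|x| = r.
Proof.
move=> ur ux; have rx : (fun=> r) @ F --> `|x|.
  by rewrite -(eq_cvg _ _ ur); exact: cvg_norm.
exact: norm_cvg_unique rx (cvg_cst r).
Qed.

Section ComplexSequences.
Variable R : realType.

Lemma invnS_lt (e : R[i]) : 0 < e -> exists N : nat, (N.+1%:R : R[i])^-1 < e.
Proof.
move=> e0; have er : e \is Num.real by exact: gtr0_real.
rewrite -(RRe_real er) in e0 *; rewrite (_ : 0 = (0 : R)%:C)%C // ltcR in e0.
have [N HN] : exists N : nat, (N.+1%:R : R)^-1 < complex.Re e.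
  exists (Num.truncn (complex.Re e)^-1).
  rewrite -[X in _ < X]invrK ltf_pV2 ?posrE ?ltr0n ?invr_gt0 //.
  by rewrite real_truncnS_gt ?num_real.
by exists N; rewrite -(rmorph_nat (real_complex R)) -fmorphV ltcR.
Qed.

Lemma cvg_invnS_dist (V : normedModType R[i]) (u : nat -> V) (x : V) :
  (forall k, `|x - u k| < k.+1%:R^-1) -> u @ \oo --> x.
Proof.
move=> ux; apply/cvgrPdist_lt => e /invnS_lt[N hN]; exists N => // k /= Nk.
exact: lt_trans (ux k) (le_lt_trans (lef_invnS Nk) hN).
Qed.

Definition cluster_indices {V : normedModType R[i]} (u : nat -> V) (x : V) k :=
  [set n | (k <= n)%N /\ `|x - u n| < k.+1%:R^-1].

Lemma cluster_indices_proper (V : normedModType R[i]) (u : nat -> V) (x : V) :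
  cluster (u @ \oo) x -> ProperFilter (filter_from setT (cluster_indices u x)).
Proof.
move=> ux; apply: filter_from_proper; last first.
  move=> k _; have := ux (u @` [set n | (k <= n)%N]) (ball x k.+1%:R^-1); case.
  - by exists k => // n /= kn; exists n.
  - by apply: nbhsx_ballx; rewrite invr_gt0 ltr0n.
  - by move=> _ [[n kn <-]]; rewrite -ball_normE => xun; exists n.
apply: filter_from_filter; first by exists 0%N.
move=> i j _ _; exists (maxn i j) => // n [ijn xun].
by split; split; rewrite ?(leq_trans _ ijn) ?(lt_le_trans xun) ?lef_invnS
  ?leq_maxl ?leq_maxr.
Qed.

Lemma cluster_compact_subseq (U V : normedModType R[i])
    (u : nat -> U) (v : nat -> V) (x : U) :
  cluster (u @ \oo) x -> compact (closure (range v)) ->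
  exists phi : nat -> nat, exists y : V,
    [/\ {homo phi : m n / (m < n)%N >-> (m < n)%N},
        (u \o phi) @ \oo --> x & (v \o phi) @ \oo --> y].
Proof.
move=> /cluster_indices_proper G_proper v_cpt.
pose G := filter_from setT (cluster_indices u x).
have vG : (v @ G) (closure (range v)).
  by exists 0%N => // n _; apply: subset_closure; exists n.
have [y [_ vy]] := v_cpt _ (fmap_proper_filter v G_proper) vG.
have near_both k m : exists2 n, (m < n)%N &
    `|x - u n| < k.+1%:R^-1 /\ `|y - v n| < k.+1%:R^-1.
  pose K := maxn k m.+1.
  have := vy (v @` cluster_indices u x K) (ball y K.+1%:R^-1); case.
  - by exists K => // n Kn; exists n.
  - by apply: nbhsx_ballx; rewrite invr_gt0 ltr0n.
  move=> _ [[n [Kn xun] <-]]; rewrite -ball_normE => yvn.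
  exists n; first exact: leq_trans (leq_maxr _ _) Kn.
  have K_le : K.+1%:R^-1 <= k.+1%:R^-1 :> R[i] := lef_invnS (leq_maxl _ _).
  by split; apply: lt_le_trans K_le.
have [phi [phi_inc phi_near]] := strictly_increasing_choice near_both.
by exists phi, y; split => //; apply: cvg_invnS_dist => k; case: (phi_near k).
Qed.

End ComplexSequences.

Theorem mainTheorem3 (R : realType) (H : completeNormedModType R[i])
  (ip : H -> H -> R[i]) (hip : is_inner_product ip)
  (Mn : nat -> {linear H -> H}) (L : nat -> set H) (M : {linear H -> H})
  (g : nat -> H) (lam : nat -> R[i]) (lam0 : R[i]) :
  (forall n, bounded_op (Mn n)) ->
  (exists C : R[i], forall n x, `|Mn n x| <= C * `|x|) ->
  (forall n, is_subspace (L n)) ->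
  (forall n x, L n x -> L n (Mn n x)) ->
  (forall h : nat -> H, (forall n, L n (h n) /\ `|h n| <= 1) ->
     rel_compact (range (fun n => Mn n (h n)))) ->
  bounded_op M ->
  (forall x, (fun n => Mn n x) @ \oo --> M x) ->
  (forall n, L n (g n) /\ `|g n| = 1) ->
  (forall n, Mn n (g n) = lam n *: g n) ->
  cluster (lam @ \oo) lam0 -> lam0 != 0 ->
  (exists2 v : H, v != 0 & M v = lam0 *: v) /\
  (exists phi : nat -> nat, exists v : H,
     [/\ {homo phi : m n / (m < n)%N >-> (m < n)%N},
         (g \o phi) @ \oo --> v & M v = lam0 *: v]).
Proof.
move=> _ [C MnC] _ _ Mn_cpt _ Mn_M g_unit g_eig lam_lam0 lam0N0.
pose a n := Mn n (g n).
have g_ball n : L n (g n) /\ `|g n| <= 1 by case: (g_unit n) => ? ->.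
have [phi [w [phi_inc lam_cvg a_cvg]]] :=
  @cluster_compact_subseq R (R[i] : numClosedFieldType)^o H lam a lam0
    lam_lam0 (Mn_cpt g g_ball).
pose v := lam0^-1 *: w.
have g_cvg : (g \o phi) @ \oo --> v.
  apply: cvg_unscale lam0N0 lam_cvg _.
  by rewrite (eq_cvg _ _ (fun k => esym (g_eig (phi k)))).
have v_unit : `|v| = 1 by apply: cvg_norm_cst g_cvg => k; exact: (g_unit _).2.
have C_ge0 : 0 <= C.
  by have := MnC 0%N (g 0%N); rewrite (proj2 (g_unit 0%N)) mulr1; exact/le_trans.
have Mv_lim : (fun k => Mn (phi k) v) @ \oo --> lam0 *: v.
  have -> : lam0 *: v = w + 0 by rewrite addr0 scalerA mulfV // scale1r.
  rewrite (_ : (fun k => _) = a \o phi + (fun k => Mn (phi k) v - a (phi k))).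
    exact: cvgD a_cvg (equibounded_diff_cvg0 C_ge0 (fun k => MnC (phi k)) g_cvg).
  by apply/funext => k /=; rewrite subrKC.
have Mv : M v = lam0 *: v.
  exact: norm_cvg_unique (cvg_subseq phi_inc (Mn_M v)) Mv_lim.
split; first by exists v; rewrite // -normr_eq0 v_unit oner_eq0.
by exists phi, v.
Qed.
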